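(* Let $\alpha\ge1$ and $\phi\in[0,2\pi_\alpha)\setminus\{\pi_\alpha/2,3\pi_\alpha/2\}$. The only solution $\zeta$ with $|\zeta|<\pi_\alpha$ of the equation $$\tan_\alpha(\zeta+\phi)-\tan_\alpha(\phi)=\zeta$$ is $\zeta=0$.
   Context: For real $a\ge1$: $\pi_a=2\int_0^1(1-t^{2a})^{-1/2}dt$; $\sin_a$ is the inverse of $s\mapsto\int_0^s(1-t^{2a})^{-1/2}dt$ on $[0,\pi_a/2]$, extended by $\sin_a(s)=\sin_a(\pi_a-s)$ to $[0,\pi_a]$, to an odd function on $[-\pi_a,\pi_a]$ and $2\pi_a$-periodically to $\mathbb{R}$; $\cos_a=\sin_a'$ and $\tan_a=\sin_a/\cos_a$ (defined where $\cos_a\neq0$). *)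

From Stdlib Require Import Reals Lra ClassicalEpsilon.
From Coquelicot Require Import Coquelicot.
Open Scope R_scope.

(* t ^ y for t >= 0 (with 0 ^ y = 0 for y > 0) *)
Definition rpow (t y : R) : R := if Rle_dec t 0 then 0 else Rpower t y.

Definition gtrig_f (a t : R) : R := / sqrt (1 - rpow t (2 * a)).

(* F_a(s) = int_0^s (1 - t^(2a))^(-1/2) dt for s in [0,1];
   the integral up to s = 1 is improper (limit s -> 1^-). *)
Definition gtrig_F (a s : R) : R :=
  if Rlt_dec s 1 then RInt (gtrig_f a) 0 s
  else RInt_gen (gtrig_f a) (at_point 0) (at_left 1).

Definition pi_a (a : R) : R := 2 * gtrig_F a 1.

(* sin_a on [0, pi_a/2]: the inverse of F_a : [0,1] -> [0, pi_a/2] *)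
Definition sin_a0 (a x : R) : R :=
  epsilon (inhabits 0) (fun s => 0 <= s <= 1 /\ gtrig_F a s = x).

(* sin_a on [0, pi_a], via sin_a(s) = sin_a(pi_a - s) *)
Definition sin_a1 (a x : R) : R :=
  if Rle_dec x (pi_a a / 2) then sin_a0 a x else sin_a0 a (pi_a a - x).

(* odd extension to [-pi_a, pi_a] *)
Definition sin_a2 (a x : R) : R :=
  if Rle_dec 0 x then sin_a1 a x else - sin_a1 a (- x).

(* 2 pi_a-periodic extension to R: reduce x into [-pi_a, pi_a) *)
Definition sin_a (a x : R) : R :=
  let p := pi_a a in
  sin_a2 a (x - 2 * p * IZR (Int_part ((x + p) / (2 * p)))).

Definition cos_a (a x : R) : R := Derive (sin_a a) x.

Definition tan_a (a x : R) : R := sin_a a x / cos_a a x.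

(** On the central interval [(-pi_a/2, pi_a/2)], [sin_a] inverts the odd primitive
    [F s = int_0^s (1 - |t|^(2a))^(-1/2) dt] ([gtrig_Fe]), so there [cos_a = 1 / F' (sin_a)]
    and [tan_a y - y = g (sin_a y)] with [g s = s F'(s) - F(s)], which is strictly
    increasing because [F'] increases with [|s|].  Since [sin_a (x + pi_a) = - sin_a x],
    [tan_a] is [pi_a]-periodic, and [cos_a] vanishes at the peaks [pi_a/2 + k pi_a], where
    [1 - |sin_a|] is quadratically small.  Writing [phi = y0 + k0 pi_a] and
    [zeta + phi = y1 + k1 pi_a] with [y0], [y1] central, the equation becomes
    [T y1 - T y0 = (k1 - k0) pi_a] for the increasing [T y = tan_a y - y]; so [k1 - k0]
    has the sign of [y1 - y0], and [|zeta| < pi_a] leaves only [k1 = k0], [y1 = y0]. *)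

From Stdlib Require Import Reals Lra Lia ZArith ClassicalEpsilon.
From Coquelicot Require Import Coquelicot.
Open Scope R_scope.

Lemma rpow_nonneg (t b : R) : 0 <= rpow t b.
Proof.
  unfold rpow; destruct (Rle_dec t 0); [lra|].
  left; apply exp_pos.
Qed.

Lemma rpow_le_self (t b : R) : 1 <= b -> 0 <= t <= 1 -> rpow t b <= t.
Proof.
  intros hb ht; unfold rpow; destruct (Rle_dec t 0); [lra|].
  replace b with (1 + (b - 1)) by ring.
  rewrite Rpower_plus, Rpower_1 by lra.
  assert (hle : Rpower t (b - 1) <= Rpower 1 (b - 1)).
  { destruct (Req_dec t 1) as [->|]; [lra|].
    apply Rle_Rpower_l; lra. }
  replace (Rpower 1 (b - 1)) with 1 in hle by (unfold Rpower; rewrite ln_1, Rmult_0_r, exp_0; lra).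
  assert (0 < Rpower t (b - 1)) by apply exp_pos.
  nra.
Qed.

Lemma rpow_lt_compat (t1 t2 b : R) : 0 < b -> 0 <= t1 < t2 -> rpow t1 b < rpow t2 b.
Proof.
  intros hb ht; unfold rpow.
  destruct (Rle_dec t1 0), (Rle_dec t2 0); try lra.
  - apply exp_pos.
  - apply Rlt_Rpower_l; lra.
Qed.

Lemma one_sub_rpow_le (s b : R) : 0 < s -> 0 <= b -> 1 - rpow s b <= b * (1 - s) / s.
Proof.
  intros hs hb; unfold rpow, Rpower; destruct (Rle_dec s 0); [lra|].
  pose proof (exp_ineq1_le (b * ln s)).
  pose proof (exp_ineq1_le (- ln s)) as hinv.
  rewrite exp_Ropp, exp_ln in hinv by lra.
  (* [exp (- ln s) >= 1 - ln s] gives [- ln s <= / s - 1] *)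
  assert (b * - ln s <= b * (/ s - 1)) by (apply Rmult_le_compat_l; lra).
  replace (b * (1 - s) / s) with (b * (/ s - 1)) by (field; lra).
  lra.
Qed.

Lemma rpow_abs_continuous (b t : R) : 1 <= b -> continuous (fun x => rpow (Rabs x) b) t.
Proof.
  intros hb. destruct (Req_dec t 0) as [->|ht].
  - apply continuity_pt_filterlim. intros eps heps.
    exists (Rmin 1 eps); split; [apply Rmin_glb_lt; lra|].
    intros x [_ hx]; simpl in *; unfold R_dist in *.
    rewrite Rminus_0_r in *; rewrite Rabs_R0.
    unfold rpow at 2; destruct (Rle_dec 0 0); [|lra].
    pose proof (Rmin_l 1 eps); pose proof (Rmin_r 1 eps).
    pose proof (rpow_nonneg (Rabs x) b); pose proof (Rabs_pos x).
    pose proof (rpow_le_self (Rabs x) b hb ltac:(lra)).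
    rewrite Rminus_0_r, Rabs_right by lra. lra.
  - assert (hpos : 0 < Rabs t) by (apply Rabs_pos_lt; auto).
    apply continuous_ext_loc with (fun x => exp (b * ln (Rabs x))).
    + exists (mkposreal _ hpos); intros x hx; change (Rabs (x - t) < Rabs t) in hx.
      unfold rpow; destruct (Rle_dec (Rabs x) 0) as [h|]; [|reflexivity].
      exfalso; pose proof (Rabs_triang_inv t x); rewrite Rabs_minus_sym in hx; lra.
    + apply continuity_pt_filterlim.
      apply (continuity_pt_comp (fun x => b * ln (Rabs x)) exp).
      * apply continuity_pt_mult; [apply continuity_pt_const; intros ??; auto|].
        apply (continuity_pt_comp Rabs ln); [apply Rcontinuity_abs|].
        apply derivable_continuous_pt; exists (/ Rabs t); apply derivable_pt_lim_ln; lra.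
      * apply derivable_continuous_pt; exists (exp (b * ln (Rabs t))); apply derivable_pt_lim_exp.
Qed.

Lemma RInt_nondecreasing_bounds (f : R -> R) (x y : R) :
  x <= y -> ex_RInt f x y ->
  (forall s t, x <= s <= t -> t <= y -> f s <= f t) ->
  (y - x) * f x <= RInt f x y <= (y - x) * f y.
Proof.
  intros hxy hf hmono.
  replace ((y - x) * f x) with (RInt (fun _ => f x) x y)
    by (rewrite RInt_const; unfold scal; simpl; unfold mult; simpl; ring).
  replace ((y - x) * f y) with (RInt (fun _ => f y) x y)
    by (rewrite RInt_const; unfold scal; simpl; unfold mult; simpl; ring).
  split; apply RInt_le; auto using ex_RInt_const; intros t ht; apply hmono; lra.
Qed.

Lemma nondecreasing_bounded_limit_at_left (f : R -> R) (lo hi M : R) :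
  lo < hi ->
  (forall x y, lo <= x <= y -> y < hi -> f x <= f y) ->
  (forall x, lo <= x < hi -> f x <= M) ->
  exists l, (forall x, lo <= x < hi -> f x <= l) /\
            filterlim f (at_left hi) (locally l).
Proof.
  intros hlh hmono hM.
  set (E := fun v => exists x, lo <= x < hi /\ v = f x).
  destruct (completeness E) as [l [hub hlub]].
  - exists M; intros v [x [hx ->]]; auto.
  - exists (f lo), lo; split; [lra|reflexivity].
  - assert (hle : forall x, lo <= x < hi -> f x <= l) by (intros x hx; apply hub; exists x; auto).
    exists l; split; [exact hle|].
    intros P [eps hP].
    assert (happrox : exists x0, lo <= x0 < hi /\ l - eps < f x0).
    { apply NNPP; intro hn; pose proof (cond_pos eps).
      apply (Rlt_not_le l (l - eps)); [lra|].
      apply hlub; intros v [x [hx ->]]; apply Rnot_lt_le; intro hlt; apply hn; eauto. }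
    destruct happrox as [x0 [hx0 hfx0]].
    assert (hd : 0 < hi - x0) by lra.
    exists (mkposreal _ hd); intros x hx hxhi; change (Rabs (x - hi) < hi - x0) in hx.
    apply hP; change (Rabs (f x - l) < eps).
    apply Rabs_def2 in hx.
    pose proof (hmono x0 x ltac:(lra) hxhi); pose proof (hle x ltac:(lra)).
    apply Rabs_def1; lra.
Qed.

Lemma is_RInt_gen_at_point_filterlim (f : R -> R) (a : R) (F : (R -> Prop) -> Prop)
  {FF : Filter F} (l : R) :
  F (fun b => ex_RInt f a b) ->
  filterlim (fun b => RInt f a b) F (locally l) ->
  is_RInt_gen f (at_point a) F l.
Proof.
  intros hex hlim P hP.
  apply (Filter_prod _ _ _ (fun x => x = a) (fun b => ex_RInt f a b /\ P (RInt f a b))).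
  - reflexivity.
  - apply filter_and; [exact hex|exact (hlim P hP)].
  - intros x b -> [hb hPb]; exists (RInt f a b); split; [exact (RInt_correct _ _ _ hb)|exact hPb].
Qed.

Lemma is_derive_of_quadratic_bound (f : R -> R) (x C d : R) :
  0 < d -> (forall h, 0 < Rabs h < d -> Rabs (f (x + h) - f x) <= C * h ^ 2) ->
  is_derive f x 0.
Proof.
  intros hd hb; apply is_derive_Reals; intros eps heps.
  set (C' := Rabs C + 1).
  assert (hC' : 0 < C') by (unfold C'; pose proof (Rabs_pos C); lra).
  assert (hm : 0 < Rmin d (eps / C')) by (apply Rmin_glb_lt; [lra|apply Rdiv_lt_0_compat; lra]).
  exists (mkposreal _ hm); intros h hh0 hh; simpl in hh.
  pose proof (Rmin_l d (eps / C')); pose proof (Rmin_r d (eps / C')).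
  assert (hpos : 0 < Rabs h) by (apply Rabs_pos_lt; auto).
  assert (hq := hb h ltac:(lra)).
  rewrite Rminus_0_r; unfold Rdiv; rewrite Rabs_mult, Rabs_inv.
  apply Rle_lt_trans with (C' * Rabs h).
  - apply Rmult_le_reg_r with (Rabs h); [lra|].
    rewrite Rmult_assoc, Rinv_l by lra.
    replace (C' * Rabs h * Rabs h) with (C' * h ^ 2) by (rewrite <- (pow2_abs h); ring).
    pose proof (Rle_abs C); pose proof (pow2_ge_0 h). unfold C' in *; nra.
  - apply Rmult_lt_reg_r with (/ C'); [apply Rinv_0_lt_compat; lra|].
    replace (C' * Rabs h * / C') with (Rabs h) by (field; lra). unfold Rdiv in *; lra.
Qed.

Lemma is_derive_inverse (f g dg : R -> R) (lb ub y : R) :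
  lb < y < ub ->
  (forall x, lb <= x <= ub -> g (f x) = x) ->
  f lb <= f y <= f ub ->
  (forall z, f lb <= z <= f ub -> is_derive g z (dg z)) ->
  continuity_pt f y -> dg (f y) <> 0 ->
  is_derive f y (/ dg (f y)).
Proof.
  intros hy hinv hmono hg hf hdg.
  assert (Prf : forall z, f lb <= z <= f ub -> derivable_pt g z)
    by (intros z hz; exists (dg z); apply is_derive_Reals, hg, hz).
  assert (hder : derive_pt g (f y) (Prf (f y) hmono) = dg (f y))
    by (apply derive_pt_eq_0, is_derive_Reals, hg, hmono).
  apply is_derive_Reals; rewrite <- hder, <- Rdiv_1_l.
  apply (Ranalysis5.derivable_pt_lim_recip_interv g f lb ub y Prf hf); [lra|lra| |].
  - intros x hx; apply hinv, hx.
  - rewrite hder; exact hdg.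
Qed.

Lemma odd_strictly_increasing (f : R -> R) (b : R) :
  (forall x, -b < x < b -> f (- x) = - f x) ->
  (forall x y, 0 <= x -> x < y -> y < b -> f x < f y) ->
  forall x y, -b < x -> x < y -> y < b -> f x < f y.
Proof.
  intros hodd hinc x y hx hxy hy.
  destruct (Rle_dec 0 x) as [hx0|hx0]; [apply hinc; lra|].
  assert (f0 : f 0 = 0) by (pose proof (hodd 0 ltac:(lra)) as h0; rewrite Ropp_0 in h0; lra).
  destruct (Rle_dec y 0) as [hy0|hy0].
  - pose proof (hinc (- y) (- x) ltac:(lra) ltac:(lra) ltac:(lra)) as h.
    rewrite !hodd in h by lra; lra.
  - pose proof (hinc 0 y ltac:(lra) ltac:(lra) ltac:(lra)) as hpos.
    pose proof (hinc 0 (- x) ltac:(lra) ltac:(lra) ltac:(lra)) as hneg.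
    rewrite hodd in hneg by lra; lra.
Qed.

Lemma antiperiodic_shift (f : R -> R) (p : R) :
  (forall x, f (x + p) = - f x) ->
  forall k x, f (x + IZR k * p) = (-1) ^ Z.abs_nat k * f x.
Proof.
  intros hf.
  assert (hnat : forall n x, f (x + INR n * p) = (-1) ^ n * f x
                          /\ f (x - INR n * p) = (-1) ^ n * f x).
  { induction n as [|n IH]; intros x.
    - simpl; replace (x + 0 * p) with x by ring; replace (x - 0 * p) with x by ring; lra.
    - rewrite S_INR; change ((-1) ^ S n) with (-1 * (-1) ^ n); split.
      + replace (x + (INR n + 1) * p) with (x + INR n * p + p) by ring.
        rewrite hf, (proj1 (IH x)); ring.
      + pose proof (hf (x - (INR n + 1) * p)) as h.
        replace (x - (INR n + 1) * p + p) with (x - INR n * p) in h by ring.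
        rewrite (proj2 (IH x)) in h; lra. }
  intros k x; destruct k as [|q|q]; simpl Z.abs_nat.
  - simpl; replace (x + 0 * p) with x by ring; ring.
  - rewrite <- positive_nat_Z, <- INR_IZR_INZ; apply hnat.
  - replace (x + IZR (Z.neg q) * p) with (x - INR (Pos.to_nat q) * p)
      by (rewrite INR_IZR_INZ, positive_nat_Z, <- Pos2Z.opp_pos, opp_IZR; ring).
    apply hnat.
Qed.

Lemma Derive_shift (f : R -> R) (c x : R) :
  Derive f (x + c) = Derive (fun w => f (w + c)) x.
Proof.
  unfold Derive; f_equal; apply Lim_ext; intros h.
  replace (x + h + c) with (x + c + h) by ring; reflexivity.
Qed.

Lemma Derive_antiperiodic_shift (f : R -> R) (p : R) :
  (forall x, f (x + p) = - f x) ->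
  forall k x, Derive f (x + IZR k * p) = (-1) ^ Z.abs_nat k * Derive f x.
Proof.
  intros hf k x; rewrite Derive_shift, <- Derive_scal.
  apply Derive_ext; intros w; apply antiperiodic_shift, hf.
Qed.

Lemma increasing_diff_eq_multiple (T : R -> R) (lo hi p : R) (d : Z) (y0 y1 : R) :
  (forall x y, lo < x -> x < y -> y < hi -> T x < T y) ->
  lo < y0 < hi -> lo < y1 < hi ->
  T y1 - T y0 = IZR d * p ->
  Rabs (y1 - y0 + IZR d * p) < p ->
  y1 - y0 + IZR d * p = 0.
Proof.
  intros hT h0 h1 hd hb.
  assert (hp : 0 < p) by (pose proof (Rabs_pos (y1 - y0 + IZR d * p)); lra).
  apply Rabs_def2 in hb.
  destruct (Rtotal_order y0 y1) as [hlt|[heq|hgt]].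
  - pose proof (hT y0 y1 ltac:(lra) hlt ltac:(lra)).
    assert (hdpos : 0 < IZR d) by (apply (Rmult_lt_reg_r p); lra).
    assert (1 <= IZR d) by (apply (lt_IZR 0) in hdpos; apply IZR_le; lia).
    nra.
  - subst y1; replace (IZR d * p) with 0 in * by lra; ring.
  - pose proof (hT y1 y0 ltac:(lra) hgt ltac:(lra)).
    assert (hdneg : IZR d < 0) by (apply (Rmult_lt_reg_r p); lra).
    assert (IZR d <= -1) by (apply (lt_IZR d 0) in hdneg; apply IZR_le; lia).
    nra.
Qed.

Lemma exists_centered_multiple (x p : R) :
  0 < p -> exists n : Z, 2 * p * IZR n - p <= x < 2 * p * IZR n + p.
Proof.
  intros hp; set (q := (x + p) / (2 * p)).
  exists (Int_part q); destruct (base_Int_part q) as [h1 h2].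
  assert (hq : q * (2 * p) = x + p) by (unfold q; field; lra).
  split; nra.
Qed.

Section GeneralizedTrigonometry.

Variable a : R.
Hypothesis ha : 1 <= a.

Definition gtrig_fe (t : R) : R := gtrig_f a (Rabs t).

Definition gtrig_Fe (s : R) : R := RInt gtrig_fe 0 s.

Lemma rpow_abs_lt_1 (t : R) : Rabs t < 1 -> 0 <= rpow (Rabs t) (2 * a) < 1.
Proof.
  intros ht; split; [apply rpow_nonneg|].
  pose proof (rpow_le_self (Rabs t) (2 * a) ltac:(lra) ltac:(split; [apply Rabs_pos|lra])).
  lra.
Qed.

Lemma gtrig_fe_ge_1 (t : R) : Rabs t < 1 -> 1 <= gtrig_fe t.
Proof.
  intros ht; unfold gtrig_fe, gtrig_f.
  pose proof (rpow_abs_lt_1 t ht).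
  assert (0 < sqrt (1 - rpow (Rabs t) (2 * a)) <= 1).
  { split; [apply sqrt_lt_R0; lra|].
    rewrite <- sqrt_1 at 2; apply sqrt_le_1_alt; lra. }
  rewrite <- Rinv_1 at 1; apply Rinv_le_contravar; lra.
Qed.

Lemma gtrig_fe_lt (t1 t2 : R) : 0 <= t1 -> t1 < t2 -> t2 < 1 -> gtrig_fe t1 < gtrig_fe t2.
Proof.
  intros h1 h12 h2; unfold gtrig_fe, gtrig_f.
  rewrite !Rabs_right by lra.
  pose proof (rpow_lt_compat t1 t2 (2 * a) ltac:(lra) ltac:(lra)).
  pose proof (rpow_abs_lt_1 t2 ltac:(rewrite Rabs_right; lra)) as h.
  rewrite Rabs_right in h by lra.
  apply Rinv_lt_contravar; [apply Rmult_lt_0_compat; apply sqrt_lt_R0; lra|].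
  apply sqrt_lt_1_alt; lra.
Qed.

Lemma gtrig_fe_even (t : R) : gtrig_fe (- t) = gtrig_fe t.
Proof. unfold gtrig_fe; rewrite Rabs_Ropp; reflexivity. Qed.

Lemma gtrig_fe_continuous (t : R) : Rabs t < 1 -> continuous gtrig_fe t.
Proof.
  intros ht; unfold gtrig_fe, gtrig_f.
  apply continuous_Rinv_comp.
  - apply (continuous_comp (fun x => 1 - rpow (Rabs x) (2 * a)) sqrt).
    + apply (continuous_minus (fun _ => 1)); [apply continuous_const|].
      apply rpow_abs_continuous; lra.
    + apply continuous_sqrt.
  - pose proof (rpow_abs_lt_1 t ht); apply Rgt_not_eq, sqrt_lt_R0; lra.
Qed.

Lemma gtrig_fe_le_inv_sqrt (t : R) : 0 <= t < 1 -> gtrig_fe t <= / sqrt (1 - t).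
Proof.
  intros ht; unfold gtrig_fe, gtrig_f; rewrite Rabs_right by lra.
  pose proof (rpow_le_self t (2 * a) ltac:(lra) ltac:(lra)).
  pose proof (rpow_nonneg t (2 * a)).
  apply Rinv_le_contravar; [apply sqrt_lt_R0; lra|apply sqrt_le_1_alt; lra].
Qed.

Lemma ex_RInt_gtrig_fe (x y : R) : Rabs x < 1 -> Rabs y < 1 -> ex_RInt gtrig_fe x y.
Proof.
  intros hx hy; apply (ex_RInt_continuous (V := R_CompleteNormedModule)).
  intros z hz; apply gtrig_fe_continuous.
  apply Rabs_def2 in hx; apply Rabs_def2 in hy; apply Rabs_def1.
  - apply Rle_lt_trans with (Rmax x y); [lra|apply Rmax_lub_lt; lra].
  - apply Rlt_le_trans with (Rmin x y); [apply Rmin_glb_lt; lra|lra].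
Qed.

Lemma gtrig_Fe_0 : gtrig_Fe 0 = 0.
Proof. exact (RInt_point (V := R_CompleteNormedModule) 0 gtrig_fe). Qed.

Lemma gtrig_Fe_sub (s1 s2 : R) :
  Rabs s1 < 1 -> Rabs s2 < 1 -> gtrig_Fe s2 - gtrig_Fe s1 = RInt gtrig_fe s1 s2.
Proof.
  intros h1 h2; unfold gtrig_Fe.
  assert (h0 : Rabs 0 < 1) by (rewrite Rabs_R0; lra).
  rewrite <- (RInt_Chasles gtrig_fe 0 s1 s2) by (apply ex_RInt_gtrig_fe; auto).
  unfold plus; simpl; ring.
Qed.

Lemma gtrig_Fe_sub_ge (s1 s2 : R) :
  Rabs s1 < 1 -> Rabs s2 < 1 -> s1 <= s2 -> s2 - s1 <= gtrig_Fe s2 - gtrig_Fe s1.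
Proof.
  intros h1 h2 h12; rewrite gtrig_Fe_sub by auto.
  replace (s2 - s1) with (RInt (fun _ => 1) s1 s2)
    by (rewrite RInt_const; unfold scal; simpl; unfold mult; simpl; ring).
  apply RInt_le; auto using ex_RInt_const, ex_RInt_gtrig_fe.
  intros x hx; apply gtrig_fe_ge_1.
  apply Rabs_def2 in h1; apply Rabs_def2 in h2; apply Rabs_def1; lra.
Qed.

Lemma gtrig_Fe_lt (s1 s2 : R) :
  Rabs s1 < 1 -> Rabs s2 < 1 -> s1 < s2 -> gtrig_Fe s1 < gtrig_Fe s2.
Proof. intros h1 h2 h12; pose proof (gtrig_Fe_sub_ge s1 s2 h1 h2 ltac:(lra)); lra. Qed.

Lemma gtrig_Fe_sub_bounds (s1 s2 : R) : 0 <= s1 -> s1 <= s2 -> s2 < 1 ->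
  (s2 - s1) * gtrig_fe s1 <= gtrig_Fe s2 - gtrig_Fe s1 <= (s2 - s1) * gtrig_fe s2.
Proof.
  intros h1 h12 h2.
  assert (Rabs s1 < 1) by (rewrite Rabs_right; lra).
  assert (Rabs s2 < 1) by (rewrite Rabs_right; lra).
  rewrite gtrig_Fe_sub by auto.
  apply RInt_nondecreasing_bounds; auto using ex_RInt_gtrig_fe.
  intros s t hs ht; destruct (Req_dec s t) as [->|]; [lra|].
  left; apply gtrig_fe_lt; lra.
Qed.

Lemma gtrig_Fe_derive (s : R) : Rabs s < 1 -> is_derive gtrig_Fe s (gtrig_fe s).
Proof.
  intros hs; apply (is_derive_RInt (V := R_CompleteNormedModule) gtrig_fe gtrig_Fe 0 s).
  - assert (hd : 0 < 1 - Rabs s) by lra.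
    exists (mkposreal _ hd); intros y hy; change (Rabs (y - s) < 1 - Rabs s) in hy.
    apply RInt_correct, ex_RInt_gtrig_fe; [rewrite Rabs_R0; lra|].
    pose proof (Rabs_triang_inv y s); lra.
  - apply gtrig_fe_continuous, hs.
Qed.

Lemma gtrig_Fe_continuous (s : R) : Rabs s < 1 -> continuity_pt gtrig_Fe s.
Proof.
  intros hs; apply continuity_pt_filterlim.
  apply (ex_derive_continuous (K := R_AbsRing) (V := R_NormedModule)).
  eexists; apply gtrig_Fe_derive, hs.
Qed.

Lemma gtrig_Fe_odd (s : R) : Rabs s < 1 -> gtrig_Fe (- s) = - gtrig_Fe s.
Proof.
  intros hs; unfold gtrig_Fe.
  pose proof (RInt_comp_lin gtrig_fe (-1) 0 0 s) as h.
  replace (-1 * 0 + 0) with 0 in h by ring; replace (-1 * s + 0) with (- s) in h by ring.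
  rewrite <- h by (apply ex_RInt_gtrig_fe; rewrite ?Rabs_R0, ?Rabs_Ropp; lra).
  rewrite <- (RInt_opp (V := R_CompleteNormedModule))
    by (apply ex_RInt_gtrig_fe; rewrite ?Rabs_R0; lra).
  apply RInt_ext; intros x _; unfold scal, opp; simpl; unfold mult; simpl.
  replace (-1 * x + 0) with (- x) by ring; rewrite gtrig_fe_even; ring.
Qed.

Lemma gtrig_Fe_le_2 (s : R) : 0 <= s < 1 -> gtrig_Fe s <= 2.
Proof.
  intros hs.
  set (G := fun t => -2 * sqrt (1 - t)).
  assert (hG : is_RInt (fun t => / sqrt (1 - t)) 0 s (G s - G 0)).
  { apply (is_RInt_derive (V := R_CompleteNormedModule) G); intros x hx;
      rewrite Rmin_left, Rmax_right in hx by lra.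
    - unfold G; auto_derive; [lra|unfold Rminus].
      field; apply Rgt_not_eq, sqrt_lt_R0; lra.
    - apply continuous_Rinv_comp; [|apply Rgt_not_eq, sqrt_lt_R0; lra].
      apply (continuous_comp (fun t => 1 - t) sqrt); [|apply continuous_sqrt].
      apply (continuous_minus (fun _ => 1)); [apply continuous_const|apply continuous_id]. }
  apply Rle_trans with (G s - G 0).
  - rewrite <- (is_RInt_unique _ _ _ _ hG).
    apply RInt_le; [lra| |eexists; exact hG|].
    + apply ex_RInt_gtrig_fe; rewrite ?Rabs_R0, ?Rabs_right; lra.
    + intros x hx; apply gtrig_fe_le_inv_sqrt; lra.
  - unfold G; rewrite Rminus_0_r, sqrt_1; pose proof (sqrt_pos (1 - s)); lra.
Qed.

Lemma is_RInt_gtrig_f (b : R) : 0 <= b < 1 -> is_RInt (gtrig_f a) 0 b (gtrig_Fe b).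
Proof.
  intros hb.
  apply (is_RInt_ext (V := R_NormedModule) gtrig_fe).
  - intros x hx; rewrite Rmin_left in hx by lra.
    unfold gtrig_fe; rewrite Rabs_right by lra; reflexivity.
  - apply (RInt_correct (V := R_CompleteNormedModule)), ex_RInt_gtrig_fe;
      rewrite ?Rabs_R0, ?Rabs_right; lra.
Qed.

Lemma gtrig_F_eq_Fe (s : R) : 0 <= s < 1 -> gtrig_F a s = gtrig_Fe s.
Proof.
  intros hs; unfold gtrig_F; destruct (Rlt_dec s 1); [|lra].
  apply is_RInt_unique, is_RInt_gtrig_f, hs.
Qed.

Lemma at_left_1_in_unit_interval : at_left 1 (fun b => 0 < b < 1).
Proof.
  exists (mkposreal 1 Rlt_0_1); intros b hb hb1; change (Rabs (b - 1) < 1) in hb.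
  apply Rabs_def2 in hb; lra.
Qed.

Lemma gtrig_Fe_limit_at_1 :
  (forall s, 0 <= s < 1 -> gtrig_Fe s <= gtrig_F a 1) /\
  filterlim gtrig_Fe (at_left 1) (locally (gtrig_F a 1)).
Proof.
  destruct (nondecreasing_bounded_limit_at_left gtrig_Fe 0 1 2) as [l [hle hlim]].
  - lra.
  - intros x y hx hy; destruct (Req_dec x y) as [->|]; [lra|].
    left; apply gtrig_Fe_lt; rewrite ?Rabs_right; lra.
  - apply gtrig_Fe_le_2.
  - enough (hl : gtrig_F a 1 = l) by (rewrite hl; auto).
    unfold gtrig_F; destruct (Rlt_dec 1 1); [lra|].
    apply (is_RInt_gen_unique (V := R_CompleteNormedModule)).
    apply (is_RInt_gen_at_point_filterlim _ _ (at_left 1)).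
    + apply (filter_imp (fun b => 0 < b < 1)); [|apply at_left_1_in_unit_interval].
      intros b hb; eexists; apply is_RInt_gtrig_f; lra.
    + apply (filterlim_ext_loc gtrig_Fe); [|exact hlim].
      apply (filter_imp (fun b => 0 < b < 1)); [|apply at_left_1_in_unit_interval].
      intros b hb; symmetry; apply is_RInt_unique, is_RInt_gtrig_f; lra.
Qed.

Lemma gtrig_Fe_lt_F1 (s : R) : 0 <= s < 1 -> gtrig_Fe s < gtrig_F a 1.
Proof.
  intros hs.
  apply Rlt_le_trans with (gtrig_Fe ((s + 1) / 2)).
  - apply gtrig_Fe_lt; rewrite ?Rabs_right; lra.
  - apply (proj1 gtrig_Fe_limit_at_1); lra.
Qed.

Lemma gtrig_F1_pos : 0 < gtrig_F a 1.
Proof. rewrite <- gtrig_Fe_0; apply gtrig_Fe_lt_F1; lra. Qed.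

Lemma gtrig_Fe_onto (y : R) :
  0 <= y < gtrig_F a 1 -> exists s, 0 <= s < 1 /\ gtrig_Fe s = y.
Proof.
  intros hy; destruct (Req_dec y 0) as [->|hy0].
  { exists 0; split; [lra|apply gtrig_Fe_0]. }
  assert (hd : 0 < gtrig_F a 1 - y) by lra.
  assert (hev := proj2 gtrig_Fe_limit_at_1 _ (locally_ball _ (mkposreal _ hd))).
  unfold filtermap in hev.
  destruct (filter_ex _ (filter_and _ _ hev at_left_1_in_unit_interval)) as [b [hb hb1]].
  change (Rabs (gtrig_Fe b - gtrig_F a 1) < gtrig_F a 1 - y) in hb.
  apply Rabs_def2 in hb.
  destruct (Ranalysis5.IVT_interv (fun s => gtrig_Fe s - y) 0 b) as [s [hs hFs]].
  - intros x hx; apply continuity_pt_minus; [|apply continuity_pt_const; intros ??; reflexivity].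
    apply gtrig_Fe_continuous; rewrite Rabs_right; lra.
  - lra.
  - rewrite gtrig_Fe_0; lra.
  - lra.
  - exists s; split; lra.
Qed.

Lemma gtrig_F1_sub_Fe_ge (s : R) :
  0 <= s < 1 -> (1 - s) * gtrig_fe s <= gtrig_F a 1 - gtrig_Fe s.
Proof.
  intros hs; set (c := gtrig_fe s); set (u := gtrig_F a 1 - gtrig_Fe s).
  assert (hc : 1 <= c) by (apply gtrig_fe_ge_1; rewrite Rabs_right; lra).
  assert (hu : 0 < u) by (pose proof (gtrig_Fe_lt_F1 s hs); unfold u; lra).
  apply Rnot_lt_le; intro hlt.
  (* then [b], halfway between [s + u / c] and [1], has [(b - s) c > u >= Fe b - Fe s] *)
  assert (huc : 0 < u / c < 1 - s)
    by (split; [apply Rdiv_lt_0_compat|apply Rmult_lt_reg_r with c; [|field_simplify]]; lra).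
  set (b := s + (u / c + (1 - s)) / 2).
  pose proof (proj1 (gtrig_Fe_sub_bounds s b ltac:(lra) ltac:(unfold b; lra) ltac:(unfold b; lra)))
    as hlow.
  pose proof (proj1 gtrig_Fe_limit_at_1 b ltac:(unfold b; lra)) as hup.
  assert (hbc : (b - s) * c = (u + (1 - s) * c) / 2) by (unfold b; field; lra).
  unfold c, u in *; lra.
Qed.

Lemma sin_a0_gtrig_F (y : R) :
  0 <= y <= gtrig_F a 1 -> 0 <= sin_a0 a y <= 1 /\ gtrig_F a (sin_a0 a y) = y.
Proof.
  intros hy; unfold sin_a0; apply epsilon_spec.
  destruct (Req_dec y (gtrig_F a 1)) as [->|hne].
  - exists 1; split; [lra|reflexivity].
  - destruct (gtrig_Fe_onto y ltac:(lra)) as [s [hs hFs]].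
    exists s; split; [lra|rewrite gtrig_F_eq_Fe; auto].
Qed.

Lemma sin_a0_gtrig_Fe (y : R) :
  0 <= y < gtrig_F a 1 -> 0 <= sin_a0 a y < 1 /\ gtrig_Fe (sin_a0 a y) = y.
Proof.
  intros hy; destruct (sin_a0_gtrig_F y ltac:(lra)) as [hs hF].
  destruct (Req_dec (sin_a0 a y) 1) as [h1|h1].
  - rewrite h1 in hF; lra.
  - rewrite gtrig_F_eq_Fe in hF by lra; split; [lra|exact hF].
Qed.

Lemma sin_a0_F1 : sin_a0 a (gtrig_F a 1) = 1.
Proof.
  pose proof gtrig_F1_pos.
  destruct (sin_a0_gtrig_F (gtrig_F a 1) ltac:(lra)) as [hs hF].
  destruct (Req_dec (sin_a0 a (gtrig_F a 1)) 1) as [|h1]; [assumption|].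
  rewrite gtrig_F_eq_Fe in hF by lra.
  pose proof (gtrig_Fe_lt_F1 (sin_a0 a (gtrig_F a 1)) ltac:(lra)); lra.
Qed.

Lemma half_pi_a : pi_a a / 2 = gtrig_F a 1.
Proof. unfold pi_a; field. Qed.

Lemma pi_a_pos : 0 < pi_a a.
Proof. pose proof gtrig_F1_pos; unfold pi_a; lra. Qed.

Lemma sin_a_reduce (x : R) (n : Z) :
  2 * pi_a a * IZR n - pi_a a <= x < 2 * pi_a a * IZR n + pi_a a ->
  sin_a a x = sin_a2 a (x - 2 * pi_a a * IZR n).
Proof.
  intros hx; pose proof pi_a_pos as hp.
  unfold sin_a; cbv zeta.
  replace (Int_part ((x + pi_a a) / (2 * pi_a a))) with n; [reflexivity|].
  apply Int_part_spec; set (q := (x + pi_a a) / (2 * pi_a a)).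
  assert (hq : q * (2 * pi_a a) = x + pi_a a) by (unfold q; field; lra).
  split; nra.
Qed.

Lemma sin_a1_reflect (t : R) : sin_a1 a (pi_a a - t) = sin_a1 a t.
Proof.
  unfold sin_a1.
  destruct (Rle_dec (pi_a a - t) (pi_a a / 2)), (Rle_dec t (pi_a a / 2)).
  - replace (pi_a a - t) with t by lra; reflexivity.
  - reflexivity.
  - f_equal; ring.
  - lra.
Qed.

Lemma sin_a_add_pi (x : R) : sin_a a (x + pi_a a) = - sin_a a x.
Proof.
  pose proof pi_a_pos as hp.
  destruct (exists_centered_multiple x (pi_a a) hp) as [n hn].
  rewrite (sin_a_reduce x n hn); set (t := x - 2 * pi_a a * IZR n).
  destruct (Rle_dec 0 t) as [ht|ht].
  - rewrite (sin_a_reduce _ (n + 1)) by (rewrite plus_IZR; unfold t in *; lra).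
    rewrite plus_IZR; replace (x + pi_a a - 2 * pi_a a * (IZR n + 1)) with (t - pi_a a)
      by (unfold t; ring).
    unfold sin_a2; destruct (Rle_dec 0 (t - pi_a a)); [unfold t in *; lra|].
    destruct (Rle_dec 0 t); [|lra].
    rewrite <- (sin_a1_reflect t); f_equal; f_equal; ring.
  - rewrite (sin_a_reduce _ n) by (unfold t in *; lra).
    replace (x + pi_a a - 2 * pi_a a * IZR n) with (pi_a a - - t) by (unfold t; ring).
    unfold sin_a2; destruct (Rle_dec 0 (pi_a a - - t)); [|unfold t in *; lra].
    destruct (Rle_dec 0 t); [lra|].
    rewrite sin_a1_reflect; ring.
Qed.

Lemma sin_a_shift (k : Z) (x : R) :
  sin_a a (x + IZR k * pi_a a) = (-1) ^ Z.abs_nat k * sin_a a x.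
Proof. apply antiperiodic_shift, sin_a_add_pi. Qed.

Lemma cos_a_shift (k : Z) (x : R) :
  cos_a a (x + IZR k * pi_a a) = (-1) ^ Z.abs_nat k * cos_a a x.
Proof. apply Derive_antiperiodic_shift, sin_a_add_pi. Qed.

Lemma tan_a_shift (k : Z) (x : R) : tan_a a (x + IZR k * pi_a a) = tan_a a x.
Proof.
  unfold tan_a; rewrite sin_a_shift, cos_a_shift; unfold Rdiv; rewrite Rinv_mult.
  set (sg := (-1) ^ Z.abs_nat k).
  assert (hsg : sg <> 0) by (apply pow_nonzero; lra).
  transitivity (sg * / sg * (sin_a a x * / cos_a a x)); [ring|].
  rewrite Rinv_r by exact hsg; ring.
Qed.

Lemma sin_a_central (y : R) : - (pi_a a / 2) < y < pi_a a / 2 ->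
  -1 < sin_a a y < 1 /\ gtrig_Fe (sin_a a y) = y.
Proof.
  intros hy; pose proof pi_a_pos.
  rewrite (sin_a_reduce y 0) by (simpl; lra); simpl IZR; rewrite Rmult_0_r, Rminus_0_r.
  unfold sin_a2, sin_a1; rewrite half_pi_a in *.
  destruct (Rle_dec 0 y).
  - destruct (Rle_dec y (gtrig_F a 1)); [|lra].
    pose proof (sin_a0_gtrig_Fe y ltac:(lra)); split; [lra|tauto].
  - destruct (Rle_dec (- y) (gtrig_F a 1)); [|lra].
    destruct (sin_a0_gtrig_Fe (- y) ltac:(lra)) as [hs hF]; split; [lra|].
    rewrite gtrig_Fe_odd by (rewrite Rabs_right; lra); lra.
Qed.

Lemma sin_a_central_lt (y1 y2 : R) : - (pi_a a / 2) < y1 -> y1 < y2 -> y2 < pi_a a / 2 ->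
  sin_a a y1 < sin_a a y2.
Proof.
  intros h1 h12 h2.
  destruct (sin_a_central y1 ltac:(lra)) as [r1 e1].
  destruct (sin_a_central y2 ltac:(lra)) as [r2 e2].
  apply Rnot_le_lt; intros [hlt|heq].
  - pose proof (gtrig_Fe_lt (sin_a a y2) (sin_a a y1) ltac:(apply Rabs_def1; lra) ltac:(apply Rabs_def1; lra) hlt); lra.
  - rewrite heq in e2; lra.
Qed.

Lemma sin_a_central_lipschitz (y1 y2 : R) :
  - (pi_a a / 2) < y1 < pi_a a / 2 -> - (pi_a a / 2) < y2 < pi_a a / 2 ->
  Rabs (sin_a a y1 - sin_a a y2) <= Rabs (y1 - y2).
Proof.
  intros h1 h2.
  destruct (sin_a_central y1 h1) as [r1 e1]; destruct (sin_a_central y2 h2) as [r2 e2].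
  assert (A1 : Rabs (sin_a a y1) < 1) by (apply Rabs_def1; lra).
  assert (A2 : Rabs (sin_a a y2) < 1) by (apply Rabs_def1; lra).
  destruct (Rle_dec (sin_a a y1) (sin_a a y2)).
  - pose proof (gtrig_Fe_sub_ge _ _ A1 A2 r) as h; rewrite e1, e2 in h.
    rewrite !Rabs_left1 by lra; lra.
  - pose proof (gtrig_Fe_sub_ge _ _ A2 A1 ltac:(lra)) as h; rewrite e1, e2 in h.
    rewrite !Rabs_right by lra; lra.
Qed.

Lemma sin_a_central_continuous (y : R) :
  - (pi_a a / 2) < y < pi_a a / 2 -> continuity_pt (sin_a a) y.
Proof.
  intros hy eps heps.
  set (delta := Rmin eps (pi_a a / 2 - Rabs y)).
  assert (hdelta : 0 < delta)
    by (apply Rmin_glb_lt; [lra|unfold Rabs; destruct Rcase_abs; lra]).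
  exists delta; split; [exact hdelta|].
  intros z [_ hz]; simpl in *; unfold R_dist in *.
  assert (hz_central : Rabs z < pi_a a / 2).
  { pose proof (Rabs_triang (z - y) y) as h; replace (z - y + y) with z in h by ring.
    pose proof (Rmin_r eps (pi_a a / 2 - Rabs y)); unfold delta in *; lra. }
  apply Rabs_def2 in hz_central.
  apply Rle_lt_trans with (Rabs (z - y)); [apply sin_a_central_lipschitz; lra|].
  apply Rlt_le_trans with delta; [exact hz|apply Rmin_l].
Qed.

Lemma sin_a_central_derive (y : R) : - (pi_a a / 2) < y < pi_a a / 2 ->
  is_derive (sin_a a) y (/ gtrig_fe (sin_a a y)).
Proof.
  intros hy.
  set (d := (pi_a a / 2 - Rabs y) / 2).
  assert (hd : 0 < d /\ - (pi_a a / 2) < y - d /\ y + d < pi_a a / 2)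
    by (unfold d; unfold Rabs; destruct Rcase_abs; lra).
  destruct (sin_a_central (y - d) ltac:(lra)) as [hl _].
  destruct (sin_a_central (y + d) ltac:(lra)) as [hu _].
  assert (hmono : sin_a a (y - d) <= sin_a a y <= sin_a a (y + d))
    by (split; left; apply sin_a_central_lt; lra).
  apply (is_derive_inverse (sin_a a) gtrig_Fe gtrig_fe (y - d) (y + d) y); [lra| |exact hmono| | |].
  - intros x hx; apply sin_a_central; lra.
  - intros z hz; apply gtrig_Fe_derive, Rabs_def1; lra.
  - apply sin_a_central_continuous, hy.
  - destruct (sin_a_central y hy) as [hs _].
    pose proof (gtrig_fe_ge_1 (sin_a a y) ltac:(apply Rabs_def1; lra)); lra.
Qed.

Lemma cos_a_central (y : R) : - (pi_a a / 2) < y < pi_a a / 2 ->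
  cos_a a y = / gtrig_fe (sin_a a y).
Proof. intros hy; apply is_derive_unique, sin_a_central_derive, hy. Qed.

Lemma cos_a_central_pos (y : R) : - (pi_a a / 2) < y < pi_a a / 2 -> 0 < cos_a a y.
Proof.
  intros hy; rewrite cos_a_central by exact hy.
  destruct (sin_a_central y hy) as [hs _].
  pose proof (gtrig_fe_ge_1 (sin_a a y) ltac:(apply Rabs_def1; lra)).
  apply Rinv_0_lt_compat; lra.
Qed.

Lemma tan_a_central (y : R) : - (pi_a a / 2) < y < pi_a a / 2 ->
  tan_a a y = sin_a a y * gtrig_fe (sin_a a y).
Proof. intros hy; unfold tan_a, Rdiv; rewrite cos_a_central, Rinv_inv by exact hy; reflexivity. Qed.

Lemma sin_a_near_peak (h : R) : Rabs h < pi_a a / 2 ->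
  sin_a a (pi_a a / 2 + h) = sin_a0 a (pi_a a / 2 - Rabs h).
Proof.
  intros hh; pose proof pi_a_pos; apply Rabs_def2 in hh as hh'.
  rewrite (sin_a_reduce _ 0) by (simpl; lra); simpl IZR; rewrite Rmult_0_r, Rminus_0_r.
  unfold sin_a2, sin_a1; destruct (Rle_dec 0 (pi_a a / 2 + h)); [|lra].
  destruct (Rle_dec (pi_a a / 2 + h) (pi_a a / 2)).
  - rewrite Rabs_left1 by lra; f_equal; ring.
  - rewrite Rabs_right by lra; f_equal; field.
Qed.

Lemma one_sub_le_gap_sq (s : R) :
  1 / 2 <= s < 1 -> 1 - s <= 4 * a * (gtrig_F a 1 - gtrig_Fe s) ^ 2.
Proof.
  intros hs; set (u := gtrig_F a 1 - gtrig_Fe s).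
  pose proof (gtrig_F1_sub_Fe_ge s ltac:(lra)) as hgap; fold u in hgap.
  pose proof (rpow_abs_lt_1 s ltac:(apply Rabs_def1; lra)) as hr.
  unfold gtrig_fe, gtrig_f in hgap; rewrite Rabs_right in hgap, hr by lra.
  set (r := rpow s (2 * a)) in *.
  assert (hq : 0 < sqrt (1 - r)) by (apply sqrt_lt_R0; lra).
  assert (hlin : 1 - s <= u * sqrt (1 - r)).
  { apply Rmult_le_reg_r with (/ sqrt (1 - r)); [apply Rinv_0_lt_compat; lra|].
    rewrite Rmult_assoc, Rinv_r by lra; lra. }
  assert (hsq : (1 - s) ^ 2 <= u ^ 2 * (1 - r)).
  { replace (u ^ 2 * (1 - r)) with ((u * sqrt (1 - r)) ^ 2)
      by (rewrite Rpow_mult_distr, <- Rsqr_pow2 with (x := sqrt _), Rsqr_sqrt by lra; ring).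
    apply pow_incr; lra. }
  assert (hbern : 1 - r <= 4 * a * (1 - s)).
  { apply Rle_trans with (2 * a * (1 - s) / s); [apply one_sub_rpow_le; lra|].
    apply Rmult_le_reg_r with s; [lra|].
    replace (2 * a * (1 - s) / s * s) with (2 * a * (1 - s)) by (field; lra).
    assert (0 <= a * (1 - s) * (2 * s - 1)) by (apply Rmult_le_pos; nra); nra. }
  assert ((1 - s) ^ 2 <= u ^ 2 * (4 * a * (1 - s)))
    by (eapply Rle_trans; [exact hsq|apply Rmult_le_compat_l; [nra|exact hbern]]).
  nra.
Qed.

Lemma sin_a0_near_F1 : exists d, 0 < d /\
  forall u, 0 < u < d -> 0 <= 1 - sin_a0 a (gtrig_F a 1 - u) <= 4 * a * u ^ 2.
Proof.
  assert (hhalf : Rabs (1 / 2) < 1) by (rewrite Rabs_right; lra).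
  pose proof (gtrig_Fe_lt_F1 (1 / 2) ltac:(lra)).
  pose proof (gtrig_Fe_lt 0 (1 / 2) ltac:(rewrite Rabs_R0; lra) hhalf ltac:(lra)) as h0.
  rewrite gtrig_Fe_0 in h0.
  exists (gtrig_F a 1 - gtrig_Fe (1 / 2)); split; [lra|intros u hu].
  destruct (sin_a0_gtrig_Fe (gtrig_F a 1 - u) ltac:(lra)) as [hs hFs].
  set (s := sin_a0 a (gtrig_F a 1 - u)) in *.
  assert (hs2 : 1 / 2 < s).
  { apply Rnot_le_lt; intros [hlt|heq].
    - pose proof (gtrig_Fe_lt s (1 / 2) ltac:(apply Rabs_def1; lra) hhalf hlt); lra.
    - rewrite heq in hFs; lra. }
  pose proof (one_sub_le_gap_sq s ltac:(lra)) as hb; rewrite hFs in hb.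
  replace (gtrig_F a 1 - (gtrig_F a 1 - u)) with u in hb by ring.
  split; lra.
Qed.

Lemma sin_a_peak : sin_a a (pi_a a / 2) = 1.
Proof.
  pose proof pi_a_pos.
  rewrite <- (Rplus_0_r (pi_a a / 2)), sin_a_near_peak by (rewrite Rabs_R0; lra).
  rewrite Rabs_R0, Rminus_0_r, half_pi_a; apply sin_a0_F1.
Qed.

Lemma cos_a_peak (k : Z) : cos_a a (pi_a a / 2 + IZR k * pi_a a) = 0.
Proof.
  rewrite cos_a_shift; unfold cos_a.
  destruct sin_a0_near_F1 as [d [hd hbound]].
  rewrite (is_derive_unique _ _ 0); [ring|].
  apply (is_derive_of_quadratic_bound _ _ (4 * a) (Rmin d (pi_a a / 2)));
    [pose proof pi_a_pos; apply Rmin_glb_lt; lra|].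
  intros h hh; pose proof (Rmin_l d (pi_a a / 2)); pose proof (Rmin_r d (pi_a a / 2)).
  rewrite sin_a_near_peak, sin_a_peak, half_pi_a by lra.
  destruct (hbound (Rabs h) ltac:(lra)).
  rewrite <- (pow2_abs h), Rabs_left1 by lra; lra.
Qed.

Definition gtrig_g (s : R) : R := s * gtrig_fe s - gtrig_Fe s.

Lemma gtrig_g_odd (s : R) : - 1 < s < 1 -> gtrig_g (- s) = - gtrig_g s.
Proof.
  intros hs; unfold gtrig_g.
  rewrite gtrig_fe_even, gtrig_Fe_odd by (apply Rabs_def1; lra); ring.
Qed.

Lemma gtrig_g_sub_ge (s1 s2 : R) : 0 <= s1 -> s1 <= s2 -> s2 < 1 ->
  s1 * (gtrig_fe s2 - gtrig_fe s1) <= gtrig_g s2 - gtrig_g s1.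
Proof.
  intros h1 h12 h2; unfold gtrig_g.
  pose proof (proj2 (gtrig_Fe_sub_bounds s1 s2 h1 h12 h2)); lra.
Qed.

Lemma gtrig_g_lt (s1 s2 : R) : - 1 < s1 -> s1 < s2 -> s2 < 1 -> gtrig_g s1 < gtrig_g s2.
Proof.
  apply odd_strictly_increasing; [apply gtrig_g_odd|].
  intros x y hx hxy hy; set (m := (x + y) / 2).
  pose proof (gtrig_fe_lt x m hx ltac:(unfold m; lra) ltac:(unfold m; lra)).
  pose proof (gtrig_fe_lt m y ltac:(unfold m; lra) ltac:(unfold m; lra) hy).
  pose proof (gtrig_g_sub_ge x m hx ltac:(unfold m; lra) ltac:(unfold m; lra)).
  pose proof (gtrig_g_sub_ge m y ltac:(unfold m; lra) ltac:(unfold m; lra) hy).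
  assert (0 < m * (gtrig_fe y - gtrig_fe m)) by (apply Rmult_lt_0_compat; unfold m in *; lra).
  assert (0 <= x * (gtrig_fe m - gtrig_fe x)) by (apply Rmult_le_pos; lra).
  lra.
Qed.

Lemma tan_a_sub_id_central (y : R) : - (pi_a a / 2) < y < pi_a a / 2 ->
  tan_a a y - y = gtrig_g (sin_a a y).
Proof.
  intros hy; destruct (sin_a_central y hy) as [_ e].
  rewrite tan_a_central by exact hy; unfold gtrig_g; rewrite e; reflexivity.
Qed.

Lemma tan_a_sub_id_lt (y1 y2 : R) : - (pi_a a / 2) < y1 -> y1 < y2 -> y2 < pi_a a / 2 ->
  tan_a a y1 - y1 < tan_a a y2 - y2.
Proof.
  intros h1 h12 h2.
  destruct (sin_a_central y1 ltac:(lra)) as [r1 _].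
  destruct (sin_a_central y2 ltac:(lra)) as [r2 _].
  rewrite !tan_a_sub_id_central by lra.
  apply gtrig_g_lt; [lra|apply sin_a_central_lt|]; lra.
Qed.

Lemma central_or_peak (x : R) :
  (exists k, x = pi_a a / 2 + IZR k * pi_a a) \/
  (exists k y, - (pi_a a / 2) < y < pi_a a / 2 /\ x = y + IZR k * pi_a a).
Proof.
  pose proof pi_a_pos as hp.
  destruct (exists_centered_multiple x (pi_a a / 2) ltac:(lra)) as [n [[hlo|heq] hhi]].
  - right; exists n, (x - IZR n * pi_a a); split; [lra|ring].
  - left; exists (n - 1)%Z; rewrite minus_IZR; lra.
Qed.

End GeneralizedTrigonometry.

Theorem mainTheorem9 (a phi : R) (ha : 1 <= a)
  (hphi : 0 <= phi < 2 * pi_a a)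
  (hphi1 : phi <> pi_a a / 2) (hphi2 : phi <> 3 * pi_a a / 2) :
  cos_a a phi <> 0 /\
  (forall zeta : R, Rabs zeta < pi_a a ->
     cos_a a (zeta + phi) <> 0 ->
     tan_a a (zeta + phi) - tan_a a phi = zeta ->
     zeta = 0).
Proof.
  pose proof (pi_a_pos a ha) as hp.
  destruct (central_or_peak a ha phi) as [[k hk]|[k0 [y0 [hy0 ->]]]].
  - exfalso.
    assert (hk01 : (k = 0 \/ k = 1)%Z).
    { assert (hlo : -1 < IZR k) by nra; assert (hhi : IZR k < 2) by nra.
      apply (lt_IZR (-1)) in hlo; apply (lt_IZR k 2) in hhi; lia. }
    destruct hk01 as [-> | ->]; simpl in hk; [apply hphi1|apply hphi2]; lra.
  - split.
    { rewrite cos_a_shift by exact ha.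
      apply Rmult_integral_contrapositive; split; [apply pow_nonzero; lra|].
      apply Rgt_not_eq, cos_a_central_pos; assumption. }
    intros zeta hz hc ht.
    destruct (central_or_peak a ha (zeta + (y0 + IZR k0 * pi_a a)))
      as [[k hk]|[k1 [y1 [hy1 hk1]]]].
    + rewrite hk, cos_a_peak in hc by exact ha; contradiction.
    + rewrite hk1, !tan_a_shift in ht by exact ha.
      assert (hzeta : zeta = y1 - y0 + IZR (k1 - k0) * pi_a a) by (rewrite minus_IZR; lra).
      rewrite hzeta in hz |- *.
      apply (increasing_diff_eq_multiple (fun y => tan_a a y - y) (- (pi_a a / 2)) (pi_a a / 2));
        [intros; apply tan_a_sub_id_lt; assumption|assumption|assumption| |assumption].
      rewrite minus_IZR; lra.
Qed.
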